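(* Let $X$ and $Y$ be Banach spaces, let $p\geq 1$ with conjugate exponent $p^*$ (so $\frac1p+\frac1{p^*}=1$, with $p^*=\infty$ when $p=1$), and let $u:X\to Y$ be a continuous linear operator. If the adjoint $u^*:Y^*\to X^*$ is almost $p^*$-summing, then for every $(x_i)_{i=1}^\infty\in Rad(X)$ we have $(u(x_i))_{i=1}^\infty\in \ell_p\langle Y\rangle$.
   Context: $r_i$ denote the Rademacher functions on $[0,1]$. For a Banach space $X$: $Rad(X)$ is the space of sequences $(x_i)\subset X$ with $\|(x_i)\|_{Rad(X)}:=\left(\int_0^1\left\|\sum_{i=1}^\infty r_i(t)x_i\right\|^2dt\right)^{1/2}<\infty$ (almost unconditionally summable sequences). For $1\le s\le\infty$, $\ell_s^w(X)$ is the space of sequences with $\|(x_i)\|_{w,s}:=\sup_{x^*\in B_{X^*}}\|(x^*(x_i))_i\|_{s}<\infty$. For $1\le p\le\infty$, $\ell_p\langle X\rangle$ is the space of sequences $(x_i)\subset X$ with $\sup\{\sum_i|x_i^*(x_i)| : (x_i^* )\in B_{\ell_{p^*}^w(X^* )}\}<\infty$ (Cohen strongly $p$-summable sequences). An operator $v\in\mathcal L(X,Y)$ is almost $s$-summing if there is $C\ge0$ with $\left(\int_0^1\left\|\sum_{i=1}^m r_i(t)v(x_i)\right\|^2dt\right)^{1/2}\le C\|(x_i)_{i=1}^m\|_{w,s}$ for all $m\in\mathbb N$ and $x_1,\dots,x_m\in X$. *)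

From HB Require Import structures.
From mathcomp Require Import all_boot all_order all_algebra.
From mathcomp Require Import all_classical all_reals all_analysis.
Set Implicit Arguments. Unset Strict Implicit. Unset Printing Implicit Defensive.
Import Order.TTheory GRing.Theory Num.Theory.
Import numFieldNormedType.Exports.
Local Open Scope classical_set_scope.
Local Open Scope ring_scope.

Definition rademacher (R : realType) (n : nat) (t : R) : R :=
  Num.sg (sin (2 ^+ n * pi * t)).

Definition int01 (R : realType) (f : R -> \bar R) : \bar R :=
  (\int[@lebesgue_measure R]_(t in `[0%R, 1%R]) f t)%E.

Definition lp_fin (R : realType) (s : \bar R) (m : nat) (a : 'I_m -> R) : R :=
  match s with
  | r%:E => (\sum_(i < m) (`|a i| `^ r)) `^ r^-1
  | _ => \big[Num.max/0]_(i < m) `|a i|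
  end.

Definition lp_seq (R : realType) (s : \bar R) (a : nat -> R) : \bar R :=
  match s with
  | r%:E => ((\sum_(0 <= i <oo) ((`|a i| `^ r)%:E)) `^ r^-1)%E
  | _ => ereal_sup (range (fun i => (`|a i|)%:E))
  end.

(* weak l_s norm: sup over a "dual unit ball" B of the l_s norm of (phi(x_i)). *)
Definition weak_fin (R : realType) (V : Type) (B : set (V -> R)) (s : \bar R)
  (m : nat) (x : 'I_m -> V) : \bar R :=
  ereal_sup [set (lp_fin s (fun i => phi (x i)))%:E | phi in B].

Definition weak_seq (R : realType) (V : Type) (B : set (V -> R)) (s : \bar R)
  (x : nat -> V) : \bar R :=
  ereal_sup [set lp_seq s (fun i => phi (x i)) | phi in B].

Definition rad_fin (R : realType) (W : lmodType R) (N : W -> R) (m : nat)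
  (w : 'I_m -> W) : \bar R :=
  sqrte (int01 (fun t => ((N (\sum_(i < m) rademacher i.+1 t *: w i)) ^+ 2)%:E)).

(* v : V -> W (on the space D of V) is almost s-summing, where the weak norm
   on V is taken w.r.t. the dual unit ball B and N is the norm of W. *)
Definition almost_summing (R : realType) (V W : lmodType R) (D : set V)
  (B : set (V -> R)) (N : W -> R) (v : V -> W) (s : \bar R) : Prop :=
  exists C : R, 0 <= C /\
    forall (m : nat) (x : 'I_m -> V), (forall i, D (x i)) ->
      (rad_fin N (fun i => v (x i)) <= C%:E * weak_fin B s x)%E.

Definition is_dual (R : realType) (X : normedModType R) (f : X -> R) : Prop :=
  (forall (a : R) (x y : X), f (a *: x + y) = a * f x + f y) /\ continuous f.

Definition dual_norm (R : realType) (X : normedModType R) (f : X -> R) : R :=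
  sup [set `|f x| | x in [set x : X | `|x| <= 1]].

Definition dual_ball (R : realType) (X : normedModType R) : set (X -> R) :=
  [set f | is_dual f /\ dual_norm f <= 1].

Definition bidual_ball (R : realType) (X : normedModType R) : set ((X -> R) -> R) :=
  [set Phi | (forall (a : R) (f g : X -> R), is_dual f -> is_dual g ->
                 Phi (fun x => a * f x + g x) = a * Phi f + Phi g) /\
             (forall f : X -> R, is_dual f -> `|Phi f| <= dual_norm f)].

Definition adjoint (R : realType) (X Y : normedModType R) (u : X -> Y)
  (g : Y -> R) : X -> R := g \o u.

Definition conj_exp (R : realType) (p : R) : \bar R :=
  if p == 1 then +oo%E else (p / (p - 1))%:E.

(* (x_i) in Rad(X): the series sum_i r_i x_i converges in L_2([0,1]; X),
   stated as the Cauchy condition for its partial sums in L_2. *)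
Definition in_Rad (R : realType) (X : normedModType R) (x : nat -> X) : Prop :=
  forall e : R, 0 < e -> exists N : nat, forall m n : nat, (N <= m)%N -> (m <= n)%N ->
    (int01 (fun t => ((`| \sum_(m <= i < n) rademacher i.+1 t *: x i |) ^+ 2)%:E)
       <= e%:E)%E.

Definition strongly_summable (R : realType) (Y : normedModType R) (p : R)
  (y : nat -> Y) : Prop :=
  exists M : R, forall ys : nat -> (Y -> R), (forall i, is_dual (ys i)) ->
    (weak_seq (@bidual_ball R Y) (conj_exp p) ys <= 1)%E ->
    (\sum_(0 <= i <oo) (`| ys i (y i) |)%:E <= M%:E)%E.

(* Fix N with int_0^1 ||sum_(N <= i < n) r_i(t) x_i||^2 dt <= 1 for all n >= N.
   If the weak l_(p^* ) norm of (y_i^* ) is at most 1, every y_i^* has norm at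
   most 1, which bounds the first N terms of sum_i |y_i^*(u x_i)|.  For the
   tail, z_i := sgn(y_i^*(u x_i)) y_i^* still has weak norm at most 1, so the
   almost summability of u^* gives int_0^1 ||sum_i r_i u^*(z_i)||^2 <= C^2.
   By orthogonality of the Rademacher functions,
     sum_(N <= i < n) |y_i^*(u x_i)|
       = int_0^1 < sum_(i < n) r_i u^*(z_i), sum_(N <= j < n) r_j x_j > dt,
   and the pointwise bound ab <= (a^2/c + c b^2)/2 with c = C + 1 shows that
   this is at most C + 1.  As r_1, ..., r_n are constant on the open dyadic
   intervals of length 2^-n, all these integrals are averages over the
   midpoints of those intervals, i.e. finite sums. *)

From HB Require Import structures.
From mathcomp Require Import all_boot all_order all_algebra.
From mathcomp Require Import all_classical all_reals all_analysis.
From mathcomp Require Import measurable_realfun.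
From mathcomp Require Import zify ring lra.
Set Implicit Arguments. Unset Strict Implicit. Unset Printing Implicit Defensive.
Import Order.TTheory GRing.Theory Num.Theory.
Import numFieldNormedType.Exports.
Local Open Scope classical_set_scope.
Local Open Scope ring_scope.

Section StepIntegral.
Variable R : realType.
Local Notation mu := (@lebesgue_measure R).

Lemma integral_step_fun (h : R -> R) (a d : R) (c : nat -> R) (K : nat) :
  0 < d ->
  (forall k t, (k < K)%N -> a + k%:R * d < t -> t < a + k.+1%:R * d -> h t = c k) ->
  measurable_fun `[a, a + K%:R * d] (EFin \o h) /\
  (\int[mu]_(t in `[a, (a + K%:R * d)%R]) (h t)%:E = (\sum_(k < K) c k * d)%:E)%E.
Proof.
move=> d0; elim: K => [|K IH] hc.
  rewrite mul0r addr0 set_itv1 big_ord0; split; first exact: measurable_fun_set1.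
  by rewrite integral_set1.
have [IHm IHi] := IH (fun k t kK => hc k t (ltnW kK)).
have leKS : a + K%:R * d <= a + K.+1%:R * d by rewrite lerD2l ler_pM2r// ler_nat.
have ltKS : a + K%:R * d < a + K.+1%:R * d by rewrite ltrD2l ltr_pM2r// ltr_nat.
have le0K : a <= a + K%:R * d by rewrite lerDl mulr_ge0// ltW.
have hK : {in `]a + K%:R * d, a + K.+1%:R * d[, h =1 cst (c K)}.
  by move=> t; rewrite in_itv /= => /andP[t1 t2]; rewrite (hc K t).
have mK : measurable_fun `]a + K%:R * d, a + K.+1%:R * d[ (EFin \o h).
  apply: (@eq_measurable_fun _ _ _ _ _ (cst (c K)%:E)); last exact: measurable_cst.
  by move=> t /[!inE] /hK /= ->.
have mKc : measurable_fun `]a + K%:R * d, a + K.+1%:R * d] (EFin \o h).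
  rewrite (@itv_bndbnd_setU _ _ _ (BLeft (a + K.+1%:R * d))) ?bnd_simp// set_itv1.
  by apply/measurable_funU => //; split => //; exact: measurable_fun_set1.
have split_itv : [set` `[a, a + K.+1%:R * d]] =
    [set` `[a, a + K%:R * d]] `|` [set` `]a + K%:R * d, a + K.+1%:R * d]] :> set R.
  by rewrite -itv_bndbnd_setU// bnd_simp.
rewrite split_itv; split; first exact/measurable_funU.
rewrite integral_setU //; last 2 first.
- exact/measurable_funU.
- apply/disj_setPS => y [/=]; rewrite 2!in_itv/= => /andP[_ yK] /andP[].
  by rewrite ltNge yK.
rewrite IHi integral_itv_bndoo // (eq_integral (cst (c K)%:E)); last first.
  by move=> t /[!inE] /hK /= ->.
rewrite integral_cst //.
have muK : mu `](a + K%:R * d)%R, (a + K.+1%:R * d)%R[%classic = d%:E.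
  rewrite lebesgue_measure_itv /= lte_fin ltKS -EFinB.
  by rewrite opprD addrACA subrr add0r -mulrBl -natrB // subSnn mul1r.
by rewrite [X in (_ * X)%E]muK big_ord_recr.
Qed.

End StepIntegral.

Section Rademacher.
Variable R : realType.

Lemma sgr_sin_itv (q : nat) (x : R) :
  q%:R * pi < x -> x < q.+1%:R * pi -> Num.sg (sin x) = (-1) ^+ q.
Proof.
elim: q x => [|q IH] x x1 x2.
  by rewrite expr0 gtr0_sg // sin_gt0_pi // -(mul0r pi) x1 /= -(mul1r pi).
have -> : x = (x - pi) + pi by rewrite subrK.
rewrite sinDpi sgrN exprS (IH (x - pi)) ?mulN1r //.
  by rewrite ltrBrDr; move: x1; rewrite -natr1 mulrDl mul1r.
by rewrite ltrBlDr; move: x2; rewrite -(@natr1 R q.+1) mulrDl mul1r.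
Qed.

Lemma rademacher_dyadic (L a k : nat) (t : R) : (a <= L)%N ->
  k%:R / 2 ^+ L < t -> t < k.+1%:R / 2 ^+ L ->
  rademacher a t = (-1) ^+ (k %/ 2 ^ (L - a)).
Proof.
move=> aL t1 t2; rewrite /rademacher.
set P : R := 2 ^+ (L - a).
have P0 : 0 < P by rewrite exprn_gt0.
have a0 : (0 : R) < 2 ^+ a by rewrite exprn_gt0.
have EL : (2 : R) ^+ L = 2 ^+ a * P by rewrite /P -exprD subnKC.
set q := (k %/ 2 ^ (L - a))%N.
have q1 : q%:R * P <= k%:R by rewrite /P -natrX -natrM ler_nat leq_divM.
have q2 : k.+1%:R <= q.+1%:R * P.
  by rewrite /P -natrX -natrM ler_nat ltn_ceil // expn_gt0.
apply: sgr_sin_itv; rewrite -mulrA [pi * t]mulrC mulrA ltr_pM2r ?pi_gt0 //.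
  apply: (le_lt_trans (y := k%:R / P)); first by rewrite ler_pdivlMr.
  by move: t1; rewrite EL ltr_pdivrMr ?mulr_gt0 // ltr_pdivrMr // mulrA [t * _]mulrC.
apply: (lt_le_trans (y := k.+1%:R / P)); last by rewrite ler_pdivrMr.
by move: t2; rewrite EL ltr_pdivlMr ?mulr_gt0 // ltr_pdivlMr // mulrA [t * _]mulrC.
Qed.

Definition dyadic_mid (L k : nat) : R := (k%:R + 2^-1) / 2 ^+ L.

Definition dyadic_avg (L : nat) (h : R -> R) : R :=
  (\sum_(k < 2 ^ L) h (dyadic_mid L k)) / 2 ^+ L.

Lemma dyadic_avg_ge0 (L : nat) (h : R -> R) :
  (forall t, 0 <= h t) -> 0 <= dyadic_avg L h.
Proof. by move=> h0; rewrite divr_ge0 ?sumr_ge0 // exprn_ge0. Qed.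

Lemma dyadic_avg_le (L : nat) (h g : R -> R) :
  (forall t, h t <= g t) -> dyadic_avg L h <= dyadic_avg L g.
Proof. by move=> hg; rewrite ler_pM2r ?invr_gt0 ?exprn_gt0 // ler_sum. Qed.

Lemma dyadic_mid_itv (L k : nat) :
  k%:R / 2 ^+ L < dyadic_mid L k /\ dyadic_mid L k < k.+1%:R / 2 ^+ L.
Proof.
have P0 : (0 : R) < 2 ^+ L by rewrite exprn_gt0.
rewrite /dyadic_mid !ltr_pM2r ?invr_gt0 // ltrDl invr_gt0 ltr0n; split => //.
by rewrite -[k.+1%:R]natr1 ltrD2l invf_lt1 // ltr1n.
Qed.

Lemma rademacher_dyadic_mid (L a k : nat) : (a <= L)%N ->
  rademacher a (dyadic_mid L k) = (-1) ^+ (k %/ 2 ^ (L - a)).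
Proof. by move=> aL; have [m1 m2] := dyadic_mid_itv L k; exact: rademacher_dyadic. Qed.

Lemma int01_dyadic (h : R -> R) (L : nat) :
  (forall k t, (k < 2 ^ L)%N -> k%:R / 2 ^+ L < t -> t < k.+1%:R / 2 ^+ L ->
     h t = h (dyadic_mid L k)) ->
  int01 (fun t => (h t)%:E) = (dyadic_avg L h)%:E.
Proof.
move=> hc; have d0 : (0 : R) < (2 ^+ L)^-1 by rewrite invr_gt0 exprn_gt0.
have hc0 k t : (k < 2 ^ L)%N -> 0 + k%:R * (2 ^+ L)^-1 < t ->
    t < 0 + k.+1%:R * (2 ^+ L)^-1 -> h t = h (dyadic_mid L k).
  by rewrite !add0r; exact: hc.
have [_ int_step] := integral_step_fun d0 hc0.
move: int_step; rewrite add0r natrX mulfV ?expf_neq0 // => int_step.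
by rewrite /int01 int_step /dyadic_avg mulr_suml.
Qed.

Lemma int01_rademacher (L : nat) (H : (nat -> R) -> R) :
  (forall a b : nat -> R, (forall i, (i < L)%N -> a i = b i) -> H a = H b) ->
  int01 (fun t => (H (fun i => rademacher i.+1 t))%:E) =
  (dyadic_avg L (fun t => H (fun i => rademacher i.+1 t)))%:E.
Proof.
move=> HL; apply: int01_dyadic => k t _ t1 t2; apply: HL => i iL.
by rewrite (rademacher_dyadic iL t1 t2) rademacher_dyadic_mid.
Qed.

Lemma sum_pairs (f : nat -> R) (M : nat) :
  \sum_(k < (2 * M)%N) f k = \sum_(k < M) (f k.*2 + f k.*2.+1).
Proof.
elim: M => [|M IH]; first by rewrite muln0 !big_ord0.
by rewrite mulnS !big_ord_recr /= IH -addrA mul2n.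
Qed.

Lemma divn_doubleD_expS (k e t : nat) :
  (e < 2)%N -> ((k.*2 + e) %/ 2 ^ t.+1 = k %/ 2 ^ t)%N.
Proof.
by move=> e2; rewrite expnS divnMA -muln2 divnMDl // (divn_small e2) addn0.
Qed.

Lemma sum_sign_div_exp2_lt (s L t : nat) : (s < t)%N -> (t < L)%N ->
  \sum_(k < 2 ^ L) ((-1) ^+ (k %/ 2 ^ s + k %/ 2 ^ t)%N : R) = 0.
Proof.
elim: s L t => [|s IH] [|L] [|t] // st tL.
  rewrite expnS (sum_pairs (fun k => (-1) ^+ (k %/ 2 ^ 0 + k %/ 2 ^ t.+1)%N)).
  rewrite big1 // => k _; rewrite expn0 !divn1 -[k.*2.+1]addn1 divn_doubleD_expS //.
  by rewrite -[k.*2]addn0 divn_doubleD_expS // !addn0 addn1 addSn exprS mulN1r addrN.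
rewrite expnS (sum_pairs (fun k => (-1) ^+ (k %/ 2 ^ s.+1 + k %/ 2 ^ t.+1)%N)).
under eq_bigr => k _ do
  rewrite -[k.*2.+1]addn1 !divn_doubleD_expS // -[k.*2]addn0 !divn_doubleD_expS //.
by rewrite big_split /= (IH L t) // addr0.
Qed.

Lemma sum_sign_div_exp2 (L s t : nat) : (s < L)%N -> (t < L)%N ->
  \sum_(k < 2 ^ L) ((-1) ^+ (k %/ 2 ^ s + k %/ 2 ^ t)%N : R) =
  (2 ^ L)%:R * (s == t)%:R.
Proof.
move=> sL tL; case: (ltngtP s t) => [st|ts|<-].
- by rewrite sum_sign_div_exp2_lt // mulr0.
- by under eq_bigr => k _ do rewrite addnC; rewrite sum_sign_div_exp2_lt // mulr0.
- rewrite mulr1 (eq_bigr (fun _ => 1)) ?sumr_const ?card_ord // => k _.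
  by rewrite addnn -signr_odd odd_double.
Qed.

Lemma rademacher_dyadic_orth (L i j : nat) : (i < L)%N -> (j < L)%N ->
  \sum_(k < 2 ^ L) rademacher i.+1 (dyadic_mid L k) * rademacher j.+1 (dyadic_mid L k)
  = (2 ^ L)%:R * (i == j)%:R.
Proof.
move=> iL jL; under eq_bigr => k _ do rewrite !rademacher_dyadic_mid // -exprD.
rewrite sum_sign_div_exp2; [|lia|lia].
by congr (_ * _%:R); apply/eqP/eqP; lia.
Qed.

End Rademacher.

Section Dual.
Variables (R : realType) (X : normedModType R).

Lemma dual0 (f : X -> R) : is_dual f -> f 0 = 0.
Proof.
move=> [f_lin _]; have := f_lin 1 0 0; rewrite scaler0 addr0 mul1r.
by move/(congr1 (fun v => v - f 0)); rewrite subrr addrK.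
Qed.

Lemma dualD (f : X -> R) x y : is_dual f -> f (x + y) = f x + f y.
Proof. by move=> [f_lin _]; have := f_lin 1 x y; rewrite scale1r mul1r. Qed.

Lemma dualZ (f : X -> R) a x : is_dual f -> f (a *: x) = a * f x.
Proof. by move=> hf; have := proj1 hf a x 0; rewrite !addr0 (dual0 hf) addr0. Qed.

Lemma dual_sum (I : Type) (f : X -> R) (s : seq I) (c : I -> R) (v : I -> X) :
  is_dual f -> f (\sum_(j <- s) c j *: v j) = \sum_(j <- s) c j * f (v j).
Proof.
move=> hf; elim: s => [|j s IH]; first by rewrite !big_nil (dual0 hf).
by rewrite !big_cons dualD // dualZ // IH.
Qed.

Lemma dual_bounded (f : X -> R) : is_dual f ->
  exists B, 0 < B /\ forall x, `|f x| <= B * `|x|.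
Proof.
move=> hf; have f0 : f x @[x --> (0 : X)] --> (0 : R).
  by rewrite -(dual0 hf); exact: (proj2 hf 0).
have [e /= e0 He] := proj1 (nbhs_norm0P (P := fun t => `|f t| < 1))
  (cvgr0_norm_lt f f0 _ ltr01).
exists (2 / e); split; first by rewrite divr_gt0.
move=> x; have [->|x0] := eqVneq x 0; first by rewrite (dual0 hf) !normr0 mulr0.
have nx : 0 < `|x| by rewrite normr_gt0.
have cp : 0 < e / 2 / `|x| by rewrite !divr_gt0.
have small : `|(e / 2 / `|x|) *: x| < e.
  by rewrite normrZ (gtr0_norm cp) divfK ?gt_eqF //; lra.
have := He _ small; rewrite dualZ // normrM (gtr0_norm cp) => fx.
rewrite ltW // -(ltr_pM2l cp) (lt_le_trans fx) //.
by rewrite le_eqVlt; apply/orP; left; apply/eqP; field; rewrite !gt_eqF.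
Qed.

Lemma dual_norm_ub (f : X -> R) x : is_dual f -> `|x| <= 1 -> `|f x| <= dual_norm f.
Proof.
move=> hf x1; have [B [B0 HB]] := dual_bounded hf.
apply: ub_le_sup; last by exists x.
by exists B => _ [y y1 <-]; rewrite (le_trans (HB y)) // ler_piMr // ltW.
Qed.

Lemma unit_ball_scale (x : X) : x != 0 -> `|(`|x|^-1 *: x)| <= 1.
Proof.
move=> x0; have nx : 0 < `|x| by rewrite normr_gt0.
by rewrite normrZ ger0_norm ?invr_ge0 // mulVf // gt_eqF.
Qed.

Lemma ler_dual_norm (f : X -> R) x : is_dual f -> `|f x| <= dual_norm f * `|x|.
Proof.
move=> hf; have [->|x0] := eqVneq x 0; first by rewrite (dual0 hf) !normr0 mulr0.
have nx : 0 < `|x| by rewrite normr_gt0.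
have := dual_norm_ub hf (unit_ball_scale x0).
rewrite dualZ // normrM normfV normr_id => fx.
by rewrite -ler_pdivrMr // mulrC.
Qed.

Lemma dual_le_normr (f : X -> R) x : is_dual f ->
  (forall z, `|z| <= 1 -> `|f z| <= 1) -> `|f x| <= `|x|.
Proof.
move=> hf f1; have [->|x0] := eqVneq x 0; first by rewrite (dual0 hf) !normr0.
have nx : 0 < `|x| by rewrite normr_gt0.
have := f1 _ (unit_ball_scale x0).
rewrite dualZ // normrM normfV normr_id => fx.
by rewrite -[leRHS]mul1r -ler_pdivrMr // mulrC.
Qed.

Lemma is_dual0 : is_dual (fun _ : X => 0 : R).
Proof. by split; [move=> *; rewrite mulr0 addr0 | exact: cst_continuous]. Qed.

Lemma is_dual_comb (f g : X -> R) a : is_dual f -> is_dual g ->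
  is_dual (fun x => a * f x + g x).
Proof.
move=> hf hg; split.
  by move=> b x y; rewrite dualD // dualZ // [g (_ + _)]dualD // dualZ //; ring.
move=> x; apply: (@continuousD _ _ _ (fun x => a * f x) g); last exact: (proj2 hg).
by apply: (@continuousM _ _ (cst a) f); [exact: cst_continuous | exact: (proj2 hf)].
Qed.

Lemma is_dualZ (f : X -> R) a : is_dual f -> is_dual (fun x => a * f x).
Proof.
move=> hf; have := is_dual_comb a hf is_dual0.
by congr is_dual; apply/funext => x; rewrite addr0.
Qed.

Lemma is_dual_sum (I : Type) (s : seq I) (c : I -> R) (g : I -> X -> R) :
  (forall i, is_dual (g i)) -> is_dual (\sum_(i <- s) c i *: g i).
Proof.
move=> hg; elim: s => [|j s IH]; first by rewrite big_nil; exact: is_dual0.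
by rewrite big_cons; exact: (is_dual_comb (c j) (hg j) IH).
Qed.

Lemma bidual0 (Phi : (X -> R) -> R) : bidual_ball Phi -> Phi (fun _ => 0) = 0.
Proof.
move=> [Phi_lin _]; have := Phi_lin 1 _ _ is_dual0 is_dual0.
have -> : (fun x : X => 1 * 0 + 0) = (fun _ => 0 : R).
  by apply/funext => x; rewrite mulr0 addr0.
by rewrite mul1r => /(congr1 (fun v => v - Phi (fun _ => 0))); rewrite subrr addrK.
Qed.

Lemma bidualZ (Phi : (X -> R) -> R) (f : X -> R) e :
  bidual_ball Phi -> is_dual f -> Phi (fun y => e * f y) = e * Phi f.
Proof.
move=> hPhi hf; have := proj1 hPhi e f _ hf is_dual0.
rewrite (bidual0 hPhi) addr0 => <-.
by congr Phi; apply/funext => y; rewrite addr0.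
Qed.

Lemma bidual_ball_eval (y : X) : `|y| <= 1 -> bidual_ball (fun f : X -> R => f y).
Proof. by move=> y1; split => // f hf; exact: dual_norm_ub. Qed.

End Dual.

Lemma is_dual_adjoint (R : realType) (X Y : normedModType R) (u : {linear X -> Y})
  (g : Y -> R) : continuous u -> is_dual g -> is_dual (adjoint u g).
Proof.
move=> ucont [g_lin g_cont]; split; first by move=> a v w; rewrite /adjoint /= linearP.
by move=> v; apply: continuous_comp; [exact: ucont | exact: g_cont].
Qed.

Section Lp.
Variable R : realType.

Lemma conj_exp_gt0 (p : R) : 1 <= p -> (0 < conj_exp p)%E.
Proof.
rewrite /conj_exp => p1; case: ifPn => [_ //|p1n].
have p1' : 1 < p by rewrite lt_neqAle eq_sym p1n.
by rewrite lte_fin divr_gt0 ?subr_gt0 //; lra.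
Qed.

Lemma lp_seq_ge_term (s : \bar R) (a : nat -> R) (i : nat) :
  (0 < s)%E -> (`|a i|%:E <= lp_seq s a)%E.
Proof.
case: s => [r | _ |//]; last by apply: ereal_sup_ubound; exists i.
rewrite lte_fin => r0.
have -> : `|a i| = (`|a i| `^ r) `^ r^-1 by rewrite -powRrM mulfV ?gt_eqF // powRr1.
rewrite /lp_seq -poweR_EFin; apply: gt0_ler_poweR; first by rewrite invr_ge0 ltW.
- by rewrite in_itv /= lee_fin powR_ge0 leey.
- by rewrite in_itv /= leey andbT; apply: nneseries_ge0 => n _; rewrite lee_fin powR_ge0.
apply: le_trans (nneseries_lim_ge (m := 0) i.+1 _); last first.
  by move=> n _ _; rewrite lee_fin powR_ge0.
by rewrite big_nat_recr //= leeDr //; apply: sume_ge0 => n _; rewrite lee_fin powR_ge0.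
Qed.

Lemma lp_fin_le_seq (s : \bar R) (m : nat) (b : 'I_m -> R) (a : nat -> R) :
  (0 < s)%E -> (forall i : 'I_m, `|b i| <= `|a i|) ->
  ((lp_fin s b)%:E <= lp_seq s a)%E.
Proof.
case: s => [r r0| _ |//] ba; last first.
  rewrite /lp_fin; elim/big_ind: _ => [||i _].
  - by rewrite (le_trans _ (lp_seq_ge_term a 0 _)) ?lte_pinfty ?lee_fin.
  - by move=> x y; rewrite /Num.max; case: ifP.
  - by rewrite (le_trans _ (lp_seq_ge_term a i _)) ?lte_pinfty ?lee_fin ?ba.
rewrite lte_fin in r0.
rewrite /lp_fin /lp_seq -poweR_EFin; apply: gt0_ler_poweR; first by rewrite invr_ge0 ltW.
- by rewrite in_itv /= lee_fin leey andbT sumr_ge0 // => i _; rewrite powR_ge0.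
- by rewrite in_itv /= leey andbT; apply: nneseries_ge0 => n _; rewrite lee_fin powR_ge0.
apply: le_trans (nneseries_lim_ge (m := 0) m _); last first.
  by move=> n _ _; rewrite lee_fin powR_ge0.
rewrite big_mkord sumEFin lee_fin; apply: ler_sum => i _.
by apply: ge0_ler_powR; rewrite ?nnegrE ?normr_ge0 ?(ltW r0) // ba.
Qed.

End Lp.

Lemma sum_orth_pairing (R : comPzRingType) (K n N : nat) (r g : nat -> nat -> R) (M : R) :
  (forall i j, (i < n)%N -> (j < n)%N ->
     \sum_(k < K) r k i * r k j = M * (i == j)%:R) ->
  \sum_(k < K) \sum_(i < n) r k i * \sum_(N <= j < n) r k j * g i j
  = M * \sum_(N <= j < n) g j j.
Proof.
move=> orth; under eq_bigr => k _ do under eq_bigr => i _ do rewrite mulr_sumr.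
rewrite exchange_big /=; under eq_bigr => i _ do rewrite exchange_big /=.
rewrite mulr_sumr exchange_big /= [in RHS]big_nat_cond [in LHS]big_nat_cond.
apply: eq_bigr => j /andP[/andP[_ jn] _].
under eq_bigr => i _ do under eq_bigr => k _ do rewrite mulrA.
under eq_bigr => i _ do rewrite -mulr_suml (orth i j (ltn_ord i) jn).
rewrite (bigD1 (Ordinal jn)) //= eqxx mulr1 big1 ?addr0 // => i /negbTE ij.
by rewrite (_ : (nat_of_ord i == j) = false) ?mulr0 ?mul0r.
Qed.

Lemma mul_le_amgm (R : realFieldType) (a b c : R) :
  0 < c -> a * b <= (a ^+ 2 / c + c * b ^+ 2) / 2.
Proof.
move=> c0; rewrite -subr_ge0.
have -> : (a ^+ 2 / c + c * b ^+ 2) / 2 - a * b = (a - c * b) ^+ 2 / (2 * c).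
  by field; rewrite gt_eqF.
by rewrite divr_ge0 ?sqr_ge0 // mulr_ge0 // ltW.
Qed.

Section DyadicPairing.
Variables (R : realType) (X : normedModType R).

Lemma dyadic_avg_pairing (f : nat -> X -> R) (x : nat -> X) (n N : nat) :
  (forall i, is_dual (f i)) ->
  dyadic_avg n (fun t => (\sum_(i < n) rademacher i.+1 t *: f i)
                           (\sum_(N <= j < n) rademacher j.+1 t *: x j))
  = \sum_(N <= j < n) f j (x j).
Proof.
move=> hf; rewrite /dyadic_avg.
have evalF t y : (\sum_(i < n) rademacher i.+1 t *: f i) y =
    \sum_(i < n) rademacher i.+1 t * f i y by rewrite fct_sumE.
under eq_bigr => k _ do rewrite evalF.
under eq_bigr => k _ do under eq_bigr => i _ do rewrite dual_sum //.
rewrite (@sum_orth_pairing _ _ _ N (fun k i => rademacher i.+1 (dyadic_mid R n k))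
  (fun i j => f i (x j)) (2 ^ n)%:R); last exact: rademacher_dyadic_orth.
by rewrite natrX mulrC mulKf // expf_neq0.
Qed.

Lemma dual_pairing_le (n N : nat) (f : nat -> X -> R) (x : nat -> X) (C : R) :
  (forall i, is_dual (f i)) -> 0 <= C ->
  dyadic_avg n (fun t => dual_norm (\sum_(i < n) rademacher i.+1 t *: f i) ^+ 2)
    <= C ^+ 2 ->
  dyadic_avg n (fun t => `|\sum_(N <= j < n) rademacher j.+1 t *: x j| ^+ 2) <= 1 ->
  \sum_(N <= j < n) f j (x j) <= C + 1.
Proof.
(* [c = C + 1] rather than [C], so that [c > 0] even when [C = 0]. *)
move=> hf C0 avgF avgT; set c := C + 1; have c0 : 0 < c by rewrite /c; lra.
pose a t := dual_norm (\sum_(i < n) rademacher i.+1 t *: f i) ^+ 2.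
pose b t := `|\sum_(N <= j < n) rademacher j.+1 t *: x j| ^+ 2.
have pairing_amgm t : (\sum_(i < n) rademacher i.+1 t *: f i)
    (\sum_(N <= j < n) rademacher j.+1 t *: x j) <= (a t / c + c * b t) / 2.
  rewrite (le_trans (ler_norm _)) // (le_trans _ (mul_le_amgm _ _ c0)) //.
  by apply: ler_dual_norm; apply: is_dual_sum.
rewrite -(dyadic_avg_pairing x n N hf) (le_trans (dyadic_avg_le n pairing_amgm)) //.
have -> : dyadic_avg n (fun t => (a t / c + c * b t) / 2) =
    (dyadic_avg n a / c + c * dyadic_avg n b) / 2.
  rewrite /dyadic_avg -mulr_suml big_split /= -mulr_suml -mulr_sumr.
  by field; rewrite ?gt_eqF ?exprn_gt0.
have avg_a : dyadic_avg n a / c <= c.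
  by rewrite ler_pdivrMr // (le_trans avgF) // /c; nra.
have avg_b : c * dyadic_avg n b <= c by rewrite ler_piMr // ltW.
lra.
Qed.

End DyadicPairing.

Section WeakUnitBall.
Variables (R : realType) (Y : normedModType R) (s : \bar R) (ys : nat -> Y -> R).
Hypotheses (s_gt0 : (0 < s)%E) (ys_dual : forall i, is_dual (ys i))
  (ys_weak : (weak_seq (@bidual_ball R Y) s ys <= 1)%E).

Lemma weak_seq_le1_normr i (y : Y) : `|ys i y| <= `|y|.
Proof.
apply: dual_le_normr => // z z1; rewrite -lee_fin (le_trans _ ys_weak) //.
rewrite (le_trans (lp_seq_ge_term (fun j => ys j z) i s_gt0)) //.
by apply: ereal_sup_ubound; exists (fun f => f z) => //; exact: bidual_ball_eval.
Qed.

Lemma weak_fin_scale_le1 (n : nat) (e : nat -> R) : (forall i, `|e i| <= 1) ->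
  (weak_fin (@bidual_ball R Y) s (fun i : 'I_n => fun y => (e i * ys i y)%R) <= 1)%E.
Proof.
move=> e1; apply/ereal_supP => _ [Phi hPhi <-]; rewrite (le_trans _ ys_weak) //.
rewrite (le_trans (lp_fin_le_seq (a := fun i => Phi (ys i)) s_gt0 _)) //.
  by move=> i; rewrite bidualZ // normrM ler_piMl.
by apply: ereal_sup_ubound; exists Phi.
Qed.

End WeakUnitBall.

Lemma rad_fin_dyadic_avg (R : realType) (W : lmodType R) (nrm : W -> R)
    (w : nat -> W) (n : nat) (C : R) : 0 <= C ->
  (rad_fin nrm (fun i : 'I_n => w i) <= C%:E)%E ->
  dyadic_avg n (fun t => nrm (\sum_(i < n) rademacher i.+1 t *: w i) ^+ 2) <= C ^+ 2.
Proof.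
move=> C0; rewrite /rad_fin
  (int01_rademacher (L := n) (H := fun r => nrm (\sum_(i < n) r i *: w i) ^+ 2)).
  rewrite /= lee_fin => rad.
  have avg0 := dyadic_avg_ge0 n
    (fun t => sqr_ge0 (nrm (\sum_(i < n) rademacher i.+1 t *: w i))).
  by rewrite -(sqr_sqrtr avg0) ler_pXn2r ?nnegrE ?sqrtr_ge0.
by move=> a b ab; congr (nrm _ ^+ 2); apply: eq_bigr => i _; rewrite ab.
Qed.

Lemma almost_summing_adjoint_tail (R : realType) (X Y : normedModType R) (p C : R)
    (u : {linear X -> Y}) (ys : nat -> Y -> R) (x : nat -> X) (N n : nat) :
  1 <= p -> continuous u -> 0 <= C ->
  (forall m (z : 'I_m -> Y -> R), (forall i, is_dual (z i)) ->
     (rad_fin (@dual_norm R X) (fun i => adjoint u (z i))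
       <= C%:E * weak_fin (@bidual_ball R Y) (conj_exp p) z)%E) ->
  (forall i, is_dual (ys i)) -> (weak_seq (@bidual_ball R Y) (conj_exp p) ys <= 1)%E ->
  (int01 (fun t => (`|\sum_(N <= i < n) rademacher i.+1 t *: x i| ^+ 2)%:E) <= 1)%E ->
  \sum_(N <= i < n) `|ys i (u (x i))| <= C + 1.
Proof.
move=> p1 ucont C0 HC ys_dual ys_weak x_tail.
pose z i y := Num.sg (ys i (u (x i))) * ys i y.
have z_dual i : is_dual (z i) by exact: is_dualZ.
have uz_dual i : is_dual (adjoint u (z i)) by exact: is_dual_adjoint.
have z_weak : (weak_fin (@bidual_ball R Y) (conj_exp p) (fun i : 'I_n => z i) <= 1)%E.
  apply: (weak_fin_scale_le1 (e := fun i => Num.sg (ys i (u (x i))))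
    (conj_exp_gt0 p1) ys_dual ys_weak n) => i.
  by rewrite normr_sg lern1 leq_b1.
have uz_rad : (rad_fin (@dual_norm R X) (fun i : 'I_n => adjoint u (z i)) <= C%:E)%E.
  rewrite (le_trans (HC n (fun i => z i) (fun i => z_dual i))) //.
  by rewrite -[leRHS]mule1 lee_wpmul2l // lee_fin.
rewrite (int01_rademacher (L := n)
  (H := fun r => `|\sum_(N <= i < n) r i *: x i| ^+ 2)) ?lee_fin in x_tail; last first.
  move=> a b ab; congr (`|_| ^+ 2); apply: eq_big_nat => i /andP[_ ilt].
  by rewrite ab.
have := dual_pairing_le uz_dual C0 (rad_fin_dyadic_avg C0 uz_rad) x_tail.
by under eq_big_nat => i _ do rewrite /adjoint /z /= -normrEsg; apply.
Qed.

Unset Implicit Arguments.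

Theorem theorem2p1 (R : realType) (X Y : completeNormedModType R) (p : R)
  (u : {linear X -> Y}) :
  1 <= p -> continuous u ->
  almost_summing (V := Y -> R) (W := X -> R) (@is_dual R Y) (@bidual_ball R Y)
    (@dual_norm R X) (adjoint u) (conj_exp p) ->
  forall x : nat -> X, in_Rad x -> strongly_summable p (fun i => u (x i)).
Proof.
move=> p1 ucont [C [C0 HC]] x xR; have [N x_tail] := xR 1 ltr01.
exists (\sum_(i < N) `|u (x i)| + (C + 1)) => ys ys_dual ys_weak.
apply: lime_le; first by apply: is_cvg_nneseries => i _ _; rewrite lee_fin.
near=> n; have Nn : (N <= n)%N by near: n; exists N.
rewrite sumEFin lee_fin (big_cat_nat (leq0n N) Nn) /= big_mkord lerD //.
  apply: ler_sum => i _; exact: weak_seq_le1_normr (conj_exp_gt0 p1) ys_dual ys_weak _ _.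
exact: almost_summing_adjoint_tail p1 ucont C0 HC ys_dual ys_weak (x_tail N n _ Nn).
Unshelve. all: by end_near.
Qed.
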